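(* Let $(X,\mathcal B,\mu,T)$ be a measure preserving system (a probability space with a measurable map $T\colon X\to X$ preserving $\mu$), let $f\colon X\to[0,\infty]$ be a measurable function, and let $(s_n)_{n\ge1}$ be a two-jumpy scale sequence. Then the function $F(x)=\liminf_{n\to\infty} s_n f(T^n x)$ satisfies $\mu\big(F^{-1}(\{0,\infty\})\big)=1$.
   Context: A scale sequence is a sequence $(s_n)_{n\ge1}$ of positive reals with $s_n\to\infty$. It is two-jumpy if $s_{n+1}\ge s_n$ for all sufficiently large $n$ and $\liminf_{n\to\infty} s_{2n}/s_n>1$. *)

From HB Require Import structures.
From mathcomp Require Import all_boot all_order all_algebra.
From mathcomp Require Import all_classical all_reals all_analysis.
From mathcomp Require Import measurable_realfun.
Set Implicit Arguments. Unset Strict Implicit. Unset Printing Implicit Defensive.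
Import Order.TTheory GRing.Theory Num.Theory.
Local Open Scope classical_set_scope.
Local Open Scope ring_scope.

(* Sequences (s_n)_{n>=1} are represented as s : nat -> R; the value s 0 is
   irrelevant (all hypotheses and limits only concern n >= 1 / n -> oo). *)

Definition scale_sequence (R : realType) (s : nat -> R) : Prop :=
  (forall n, (0 < n)%N -> 0 < s n) /\ s @ \oo --> +oo.

Definition two_jumpy (R : realType) (s : nat -> R) : Prop :=
  (exists N, forall n, (N <= n)%N -> s n <= s n.+1) /\
  (1%:E < limn_einf (fun n => (s (n.*2) / s n)%:E))%E.

Definition measure_preserving (d : measure_display) (X : measurableType d)
  (R : realType) (mu : set X -> \bar R) (T : X -> X) : Prop :=
  measurable_fun setT T /\
  (forall A, measurable A -> mu (T @^-1` A) = mu A).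

From HB Require Import structures.
From mathcomp Require Import all_boot all_order all_algebra.
From mathcomp Require Import all_classical all_reals all_analysis.
From mathcomp Require Import measurable_realfun.
From mathcomp Require Import zify ring lra.
Import Order.TTheory GRing.Theory Num.Theory.

(* The liminf [F x = liminf s_n f(T^n x)] is measurable and, [s] being
   eventually nondecreasing, [F (T x) <= F x]; as [T] preserves [mu], [F] is
   then constant along almost every orbit.  Fix [c > 1] with [c s_m <= s_2m]
   for large [m], and [theta < 1 < c theta].  If [0 < F x = r < oo], there are
   arbitrarily late times [n] with [s_n f(T^n x) < c theta r]; for every [j] in
   a window of length about [n/2] ending at [n - K], the point [T^j x] (where
   [F] is still [r]) then dips below [theta F] at the time [n - j >= K].  So
   [x] enters, after a delay at most three times its length, a run of visits to
   the set [D K] of points dipping below [theta F] at some time [>= K].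
   Counting such runs along orbits and integrating against the invariant
   measure bounds the measure of these [x] by [4 mu (D K)], which tends to [0]
   as [D K] decreases to the empty set. *)

Lemma sum_nat_bool_le (P : pred nat) a b : \sum_(a <= i < b) P i <= b - a.
Proof. by rewrite -[b - a]muln1 -sum_nat_const_nat leq_sum // => i _; case: (P i). Qed.

(* Each start [i] is charged to the run it opens: the at most [r + l <= 4 l]
   starts up to the end of that run cost at most four times its length. *)
Lemma sum_run_starts_le (P Q : pred nat) (M : nat) :
  (forall i, P i -> exists r l, [/\ 0 < l, r <= 3 * l, r + l <= M &
      forall j, r <= j < r + l -> Q (i + j)]) ->
  forall t N, \sum_(t <= i < N) P i <= 4 * \sum_(t <= j < N + M) Q j.
Proof.
move=> runs t N; have [k] := ubnP (N - t); elim: k t => // k IH t.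
rewrite ltnS => Ntk.
have [Nt|tN] := leqP N t; first by rewrite big_geq.
have [Pt|nPt] := boolP (P t); last first.
  rewrite big_ltn // (negbTE nPt) add0n (big_ltn (ltn_addr _ tN)) mulnDr.
  by rewrite (leq_trans (IH t.+1 _)) ?leq_addl //; lia.
have [r [l [l0 rl rlM Qrun]]] := runs t Pt.
set u := t + r + l.
have tu : t <= u by rewrite /u; lia.
have uNM : u <= N + M by rewrite /u; lia.
have Qu : l <= \sum_(t <= j < u) Q j.
  rewrite (big_cat_nat (leq_addr r t)) ?leq_addr //=; apply: leq_trans (leq_addl _ _).
  rewrite (eq_big_nat _ _ (F2 := fun=> 1)) ?sum_nat_const_nat; first by rewrite /u; lia.
  by move=> j /andP[j1 j2]; rewrite -(subnKC (leq_trans (leq_addr r t) j1)) Qrun //; lia.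
have [uN|Nu] := leqP u N.
  rewrite (big_cat_nat tu uN) (big_cat_nat tu uNM) mulnDr leq_add ?IH //=.
    by apply: leq_trans (sum_nat_bool_le _ _ _) _; move: Qu; rewrite /u; lia.
  by rewrite /u; lia.
apply: leq_trans (sum_nat_bool_le _ _ _) _.
rewrite (big_cat_nat tu uNM) /=; move: Qu; rewrite /u in Nu *; lia.
Qed.

Lemma half_window n K : 4 * K <= n -> 0 < K ->
  exists r l, [/\ 0 < l, r <= 3 * l, r + l <= n &
    forall j, r <= j < r + l -> K <= n - j /\ (n - j).*2 <= n].
Proof.
move=> Kn K0; have := odd_double_half n; have : odd n <= 1 by case: (odd n).
rewrite -!muln2 => odd1 nE.
exists (n - n./2), (n./2 - K).+1; split; [by []|lia|lia|] => j /andP[j1 j2].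
by rewrite -muln2; split; lia.
Qed.

Lemma eventually_nondecreasing_le (R : numDomainType) (s : nat -> R) N0 :
  (forall n, N0 <= n -> (s n <= s n.+1)%R) ->
  forall m n, N0 <= m -> m <= n -> (s m <= s n)%R.
Proof.
move=> inc m n Nm /subnK <-; elim: (n - m) => [|k IH]; rewrite ?add0n // addSn.
by apply: le_trans IH (inc _ _); rewrite (leq_trans Nm) ?leq_addl.
Qed.

Local Open Scope classical_set_scope.
Local Open Scope ring_scope.

Lemma ler_natmul_shift (R : archiRealFieldType) (a b : R) (M : nat) :
  (forall N, a *+ N <= b *+ (N + M)) -> a <= b.
Proof.
move=> le_ab; rewrite leNgt; apply/negP => ba.
set N := (Num.truncn (b *+ M / (a - b))).+1.
have := truncnS_gt (b *+ M / (a - b)); rewrite -/N ltr_pdivrMr ?subr_gt0 //.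
have := le_ab N; rewrite mulrnDr -lerBlDl -mulrnBl.
by move=> h1 h2; have := le_lt_trans h1 h2; rewrite mulr_natl ltxx.
Qed.

Section ereal_facts.
Context {R : realType}.
Local Open Scope ereal_scope.
Implicit Types (u v : (\bar R)^nat) (a b : \bar R).

Lemma ereal_rat_between {a b} : a < b -> exists q : rat, a < (ratr q)%:E < b.
Proof.
have Q (x y : R) : (x < y)%R -> exists q : rat, x%:E < (ratr q)%:E < y%:E.
  by move=> /rat_in_itvoo[q]; rewrite in_itv /= => qxy; exists q; rewrite !lte_fin.
case: a b => [a||] [b||] //= ab.
- by apply: Q; rewrite -lte_fin.
- have [|q /andP[aq _]] := Q a (a + 1)%R; first by lra.
  by exists q; rewrite aq ltry.
- have [|q /andP[_ qb]] := Q (b - 1)%R b; first by lra.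
  by exists q; rewrite qb ltNyr.
- by exists 0%R; rewrite ltNyr ltry.
Qed.

Lemma ereal_pos_fin a : 0 < a < +oo -> exists2 r : R, (0 < r)%R & a = r%:E.
Proof.
move=> /andP[a0 ay]; have afin : a \is a fin_num by rewrite ge0_fin_numE ?ltW.
by exists (fine a); rewrite ?fineK // -lte_fin fineK.
Qed.

Lemma limn_einfE u : limn_einf u = ereal_sup (range (einfs u)).
Proof. by rewrite limn_einf_lim; apply/cvg_lim => //; exact: cvg_einfs_sup. Qed.

Lemma limn_einf_lt {u a} : limn_einf u < a ->
  forall K, exists2 m, (K <= m)%N & u m < a.
Proof.
rewrite limn_einfE => ua K; have : einfs u K < a.
  by apply: le_lt_trans ua; apply: ereal_sup_ubound; exists K.
by move=> /ereal_inf_lt[_ [m /= Km <-] uma]; exists m.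
Qed.

Lemma lt_limn_einf {u a} : a < limn_einf u ->
  exists K, forall m, (K <= m)%N -> a < u m.
Proof.
rewrite limn_einfE => /ereal_sup_gt[_ [K _ <-] aK]; exists K => m Km.
by apply: lt_le_trans aK _; apply: ereal_inf_lbound; exists m.
Qed.

Lemma limn_einf_ge u a N : (forall n, (N <= n)%N -> a <= u n) ->
  a <= limn_einf u.
Proof.
move=> au; rewrite limn_einfE; apply: (@le_trans _ _ (einfs u N)).
  by apply: le_ereal_inf_tmp => _ [n /= Nn <-]; exact: au.
by apply: ereal_sup_ubound; exists N.
Qed.

Lemma limn_einf_le_shift u v N :
  (forall n, (N <= n)%N -> u n <= v n.+1) -> limn_einf u <= limn_einf v.
Proof.
move=> uv; rewrite !limn_einfE; apply: ge_ereal_sup => _ [K _ <-].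
apply: le_trans (nondecreasing_einfs u (leq_maxl K N)) _.
apply: (@le_trans _ _ (einfs v (maxn K N).+1)); last first.
  by apply: ereal_sup_ubound; exists (maxn K N).+1.
apply: le_ereal_inf_tmp => _ [[|k] //= Kk <-].
apply: le_trans (uv _ (leq_trans (leq_maxr K N) Kk)).
by apply: ereal_inf_lbound; exists k.
Qed.

Lemma preimage_0y_setC (T : Type) (F : T -> \bar R) : (forall x, 0 <= F x) ->
  F @^-1` [set 0; +oo] = ~` (F @^-1` `]0%E, +oo%E[).
Proof.
move=> F0; apply/seteqP; split => x /=; rewrite in_itv /=.
  by move=> [->|->]; rewrite ltxx ?andbF.
move/negP; rewrite lt_neqAle F0 ltey andbT negb_and !negbK => /orP[/eqP <-|/eqP ->];
  by [left|right].
Qed.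

End ereal_facts.

Lemma two_jumpy_jump {R : realType} {s : nat -> R} :
  (forall n, (0 < n)%N -> 0 < s n) -> two_jumpy s ->
  exists2 c, 1 < c & exists K0, forall m n,
    (K0 <= m)%N -> (m.*2 <= n)%N -> c * s m <= s n.
Proof.
move=> s_gt0 [[N0 s_nondecr] ratio].
have [q /andP[q1 qL]] := ereal_rat_between ratio.
have [K1 HK1] := lt_limn_einf qL.
exists (ratr q); first by rewrite -lte_fin.
exists (maxn (maxn K1 N0) 1) => m n Km mn.
have sm : 0 < s m by apply: s_gt0; lia.
have := HK1 m ltac:(lia).
rewrite lte_fin ltr_pdivlMr // => /ltW /le_trans; apply.
apply: eventually_nondecreasing_le s_nondecr _ _ _ mn.
by rewrite -addnn; lia.
Qed.

Lemma measurable_iter {d} {X : measurableType d} {T : X -> X} :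
  measurable_fun setT T -> forall n, measurable_fun setT (iter n T).
Proof. by move=> mT; elim=> [|n IH]; [exact: measurable_id|exact: measurableT_comp mT IH]. Qed.

Definition runs_upto {X : Type} (T : X -> X) (D : set X) (M : nat) : set X :=
  \bigcup_r \bigcup_(l in [set l | [/\ (0 < l)%N, (r <= 3 * l)%N & (r + l <= M)%N]])
    \bigcap_(j in [set j | (r <= j < r + l)%N]) (iter j T @^-1` D).

Definition runs {X : Type} (T : X -> X) (D : set X) : set X :=
  \bigcup_M runs_upto T D M.

Definition orbit_liminf {X : Type} {R : realType} (s : nat -> R)
    (f : X -> \bar R) (T : X -> X) (x : X) : \bar R :=
  limn_einf (fun n => ((s n)%:E * f (iter n T x))%E).

Section measure_preserving_iter.
Context {d : measure_display} {X : measurableType d} {R : realType}.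
Context {mu : {finite_measure set X -> \bar R}} {T : X -> X}.
Hypothesis hT : measure_preserving mu T.
Local Open Scope ereal_scope.

Lemma measurable_preimage A : measurable A -> measurable (T @^-1` A).
Proof. by move=> mA; rewrite -[_ @^-1` _]setTI; exact: hT.1. Qed.

Lemma measurable_preimage_iter n A : measurable A -> measurable (iter n T @^-1` A).
Proof. by move=> mA; rewrite -[_ @^-1` _]setTI; exact: measurable_iter hT.1 n _ _ mA. Qed.

Lemma measure_preimage_iter n A : measurable A -> mu (iter n T @^-1` A) = mu A.
Proof.
elim: n A => // n IH A mA.
rewrite (_ : _ @^-1` _ = iter n T @^-1` (T @^-1` A)) // IH ?hT.2 //.
exact: measurable_preimage.
Qed.

Lemma negligible_preimage_iter n A :
  mu.-negligible A -> mu.-negligible (iter n T @^-1` A).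
Proof.
move=> [B [mB B0 AB]]; exists (iter n T @^-1` B); split.
- exact: measurable_preimage_iter.
- by rewrite measure_preimage_iter.
- by move=> x /AB.
Qed.

Lemma negligible_drop (F : X -> \bar R) : measurable_fun setT F ->
  (forall x, F (T x) <= F x) -> mu.-negligible [set x | F (T x) < F x].
Proof.
move=> mF FT.
(* [U n] ranges over the sublevel sets [F < q], [q] rational (enumerated by
   [unpickle]); [T] maps each into itself, so each is invariant up to a null
   set. *)
pose U n := F @^-1` `]-oo, (ratr (odflt 0 (@unpickle rat n)))%:E[.
have mU n : measurable (U n) by rewrite -[U n]setTI; exact: mF (emeasurable_itv _).
apply: (negligibleS _ (negligible_bigcup (F := fun n => T @^-1` U n `\` U n) _)).
  move=> x /ereal_rat_between[q /andP[q1 q2]]; exists (pickle q) => //.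
  by rewrite /U pickleK /= !in_itv /= q1 ltNge (ltW q2).
move=> n; have mTU : measurable (T @^-1` U n) := measurable_preimage _ (mU n).
apply/negligibleP; first exact: measurableD.
rewrite measureD // ?ltey_eq ?fin_num_measure // setIidr; last first.
  by move=> x; rewrite /U /= !in_itv /=; exact: le_lt_trans (FT x).
by rewrite [X in X - _](hT.2 _ (mU n)) subee // fin_num_measure.
Qed.

Lemma subinvariant_iter_ae (F : X -> \bar R) : measurable_fun setT F ->
  (forall x, F (T x) <= F x) ->
  mu.-negligible [set x | exists j, F (iter j T x) != F x].
Proof.
move=> mF FT; apply: (negligibleS _ (negligible_bigcup
  (fun j => negligible_preimage_iter j _ (negligible_drop _ mF FT)))).
move=> x [j]; elim: j => [|j IH]; first by rewrite eqxx.
have [Fj|/IH//] := eqVneq (F (iter j T x)) (F x).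
by rewrite -Fj => Fj1; exists j => //=; rewrite lt_neqAle Fj1 FT.
Qed.

Lemma measurable_indic_iter n A : measurable A ->
  measurable_fun setT (fun x => (\1_A (iter n T x) : R)%:E).
Proof.
move=> mA; apply/measurable_EFinP.
apply: (@measurableT_comp _ _ _ _ _ _ (\1_A : X -> R)); first exact: measurable_indic.
exact: measurable_iter hT.1 n.
Qed.

Lemma integral_sum_indic_iter N A : measurable A ->
  \int[mu]_x (\sum_(i < N) (\1_A (iter i T x) : R)%:E) = mu A *+ N.
Proof.
move=> mA; have indic0 i x : setT x -> 0 <= (\1_A (iter i T x) : R)%:E.
  by rewrite lee_fin indicE.
rewrite (ge0_integral_sum mu measurableT (I := 'I_N)
  (fun i => measurable_indic_iter i _ mA) (fun i => indic0 i)).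
rewrite (eq_bigr (fun=> mu A)) ?sumr_const ?card_ord // => i _.
have -> : (fun x => (\1_A (iter i T x) : R)%:E) = (fun x => (\1_(iter i T @^-1` A) x)%:E) by [].
have mAi : measurable (iter i T @^-1` A) := measurable_preimage_iter i _ mA.
by rewrite integral_indic // setIT; exact: measure_preimage_iter.
Qed.

Lemma measurable_runs_upto D M : measurable D -> measurable (runs_upto T D M).
Proof.
move=> mD; apply: bigcup_measurable => r _; apply: bigcup_measurable => l [l0 _ _].
apply: bigcap_measurable => [|j _]; last exact: measurable_preimage_iter.
by exists r; rewrite /= leqnn -{1}[r]addn0 ltn_add2l.
Qed.

Lemma sum_indic_iter_le_runs D M N x :
  (\sum_(i < N) (\1_(runs_upto T D M) (iter i T x) : R)
    <= 4 * \sum_(j < N + M) (\1_D (iter j T x) : R))%R.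
Proof.
under eq_bigr do rewrite indicE; under [X in (_ <= 4 * X)%R]eq_bigr do rewrite indicE.
rewrite -!natr_sum -natrM ler_nat.
have := sum_run_starts_le (fun i => iter i T x \in runs_upto T D M)
  (fun j => iter j T x \in D) M _ 0 N.
rewrite !big_mkord; apply => i; rewrite inE => -[r _ [l [l0 rl rlM] Dr]].
by exists r, l; split => // j rj; rewrite inE addnC iterD; exact: Dr.
Qed.

Lemma measure_runs_upto_le D M : measurable D ->
  mu (runs_upto T D M) <= 4%:E * mu D.
Proof.
move=> mD; set Z := runs_upto T D M; have mZ : measurable Z := measurable_runs_upto D M mD.
have count N : mu Z *+ N <= 4%:E * (mu D *+ (N + M)).
  rewrite -!integral_sum_indic_iter // -ge0_integralZl_EFin //; last first.
  - by apply: emeasurable_sum => j; exact: measurable_indic_iter.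
  - by move=> x _; apply: sume_ge0 => j _; rewrite lee_fin indicE.
  apply: ge0_le_integral => //.
  - by move=> x _; apply: sume_ge0 => i _; rewrite lee_fin indicE.
  - by apply: emeasurable_sum => i; exact: measurable_indic_iter.
  - by apply: measurable_funeM; apply: emeasurable_sum => j; exact: measurable_indic_iter.
  by move=> x _; rewrite !sumEFin -EFinM lee_fin sum_indic_iter_le_runs.
have fZ : mu Z \is a fin_num := fin_num_measure mu Z mZ.
have fD : mu D \is a fin_num := fin_num_measure mu D mD.
move: count fZ fD.
case: (mu Z) => [z| |] //; case: (mu D) => [w| |] // count _ _.
rewrite -EFinM lee_fin; apply: (@ler_natmul_shift _ _ _ M) => N.
by move: (count N); rewrite -!EFin_natmul -EFinM lee_fin mulrnAr.
Qed.

Lemma measure_runs_le D : measurable D -> mu (runs T D) <= 4%:E * mu D.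
Proof.
move=> mD; have mZ M := measurable_runs_upto D M mD.
have cv : mu \o runs_upto T D @ \oo --> mu (runs T D).
  apply: nondecreasing_cvg_mu => //; first exact: bigcupT_measurable.
  move=> a b ab; apply/subsetPset => x [r _ [l [l0 rl rlM] Dr]].
  by exists r => //; exists l => //; split => //; exact: leq_trans rlM ab.
rewrite -(cvg_lim _ cv) //; apply: lime_le; first by apply/cvg_ex; eexists; exact: cv.
by apply: nearW => M; exact: measure_runs_upto_le.
Qed.

End measure_preserving_iter.

Section orbit_liminf.
Context {d : measure_display} {X : measurableType d} {R : realType}.
Context {mu : {finite_measure set X -> \bar R}} {T : X -> X}.
Context {f : X -> \bar R} {s : nat -> R}.
Hypotheses (hT : measure_preserving mu T) (mf : measurable_fun setT f).
Hypotheses (f_ge0 : forall x, (0 <= f x)%E) (s_gt0 : forall n, (0 < n)%N -> 0 < s n).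
Local Open Scope ereal_scope.
Local Notation F := (orbit_liminf s f T).
Local Notation phi n x := ((s n)%:E * f (iter n T x)).

Lemma orbit_liminf_ge0 x : 0 <= F x.
Proof.
apply: (limn_einf_ge _ _ 1) => n n1; apply: mule_ge0 => //.
by rewrite lee_fin ltW // s_gt0.
Qed.

Lemma measurable_phi n : measurable_fun setT (fun x => phi n x).
Proof. by apply: measurable_funeM; exact: measurableT_comp mf (measurable_iter hT.1 n). Qed.

Lemma measurable_orbit_liminf : measurable_fun setT F.
Proof.
have -> : F = -%E \o (fun x => limn_esup (fun n => - phi n x)) by [].
apply: measurableT_comp; first exact: oppe_measurable.
apply: (measurable_fun_limn_esup (f := fun n x => - phi n x)) => n.
by apply: measurableT_comp; [exact: oppe_measurable|exact: measurable_phi].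
Qed.

Lemma measurable_orbit_liminf_pos : measurable (F @^-1` `]0%E, +oo%E[).
Proof. by rewrite -[_ @^-1` _]setTI; exact: measurable_orbit_liminf (emeasurable_itv _). Qed.

Context {N0 : nat}.
Hypothesis s_nondecr : forall n, (N0 <= n)%N -> (s n <= s n.+1)%R.

Lemma orbit_liminf_subinvariant x : F (T x) <= F x.
Proof.
apply: (limn_einf_le_shift _ _ N0) => n Nn; rewrite [in leRHS]iterSr.
by apply: lee_wpmul2r; [exact: f_ge0|rewrite lee_fin s_nondecr].
Qed.

Context {c : R} {K0 : nat}.
Hypotheses (c_gt1 : (1 < c)%R)
  (s_jump : forall m n, (K0 <= m)%N -> (m.*2 <= n)%N -> (c * s m <= s n)%R).

Local Notation theta := ((c + 1) / (2 * c))%R.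

Let theta_bounds : (theta < 1 < c * theta)%R.
Proof.
have c1 := c_gt1; have c0 : (c != 0)%R by rewrite gt_eqF // (lt_trans ltr01 c1).
apply/andP; split; first by rewrite ltr_pdivrMr ?mul1r; lra.
have -> : (c * theta = (c + 1) / 2)%R by field.
lra.
Qed.

Let D K := \bigcup_(m in [set m | (K <= m)%N])
  (F @^-1` `]0%E, +oo%E[ `&` [set y | phi m y < theta%:E * F y]).

Let measurable_D K : measurable (D K).
Proof.
apply: bigcup_measurable => m _; apply: measurableI; first exact: measurable_orbit_liminf_pos.
rewrite -[X in measurable X]setTI; apply: measurable_lte => //.
  exact: measurable_phi.
exact: measurable_funeM measurable_orbit_liminf.
Qed.

Lemma measure_D_cvg0 : mu \o D @ \oo --> 0.
Proof.
have D0 : \bigcap_K D K = set0.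
  apply/seteqP; split => // y Dy; have [m _ [/= Fy _]] := Dy 0%N I.
  move: Fy; rewrite in_itv /= => /ereal_pos_fin[r r0 Fr].
  have : (theta * r)%:E < F y.
    by rewrite Fr lte_fin; have /andP[th1 _] := theta_bounds; nra.
  move=> /lt_limn_einf[K HK]; have [m' Km' [_ /=]] := Dy K I.
  by rewrite Fr -EFinM => hm; have := lt_trans (HK m' Km') hm; rewrite ltxx.
rewrite -(measure0 mu) -D0; apply: nonincreasing_cvg_mu => //.
- by rewrite ltey_eq fin_num_measure.
- exact: bigcapT_measurable.
- move=> a b ab; apply/subsetPset => y [m /= bm Dy]; exists m => //.
  exact: leq_trans ab bm.
Qed.

(* For [j] in the window of [half_window], [m := n - j] satisfies [K <= m] and
   [2 m <= n], hence [c s_m <= s_n]: a small value of [s_n f(T^n x)] makes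
   [T^j x] dip at time [m]. *)
Lemma orbit_run x K : (maxn K0 1 <= K)%N -> 0 < F x < +oo ->
  (forall j, F (iter j T x) = F x) -> runs T (D K) x.
Proof.
move=> KK /[dup] Fx /ereal_pos_fin[r r0 Fr] inv.
have c0 : (0 < c)%R by rewrite (lt_trans ltr01 c_gt1).
have : F x < ((c * theta) * r)%:E.
  by rewrite Fr lte_fin; have /andP[_ th1] := theta_bounds; nra.
move=> /limn_einf_lt /(_ (4 * K)%N)[n Kn phin].
have [r0' [l [l_gt0 rl rln win]]] := half_window _ _ Kn ltac:(lia).
exists n => //; exists r0' => //; exists l; first by split.
move=> j /win[Kj jn]; exists (n - j)%N => //; split; first by rewrite /= inv in_itv.
rewrite /= inv Fr -EFinM -iterD subnK; last lia.
rewrite -(@lte_pmul2l _ c%:E) ?lte_fin // -EFinM mulrA.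
apply: le_lt_trans phin; rewrite muleA -EFinM.
by apply: lee_wpmul2r => //; rewrite lee_fin s_jump //; lia.
Qed.

Lemma measure_orbit_liminf_pos : mu (F @^-1` `]0%E, +oo%E[) = 0.
Proof.
have [B [mB B0 invB]] := subinvariant_iter_ae hT _ measurable_orbit_liminf
  orbit_liminf_subinvariant.
set W := F @^-1` `]0%E, +oo%E[; have mW : measurable W := measurable_orbit_liminf_pos.
apply/eqP; rewrite eq_le measure_ge0 andbT.
have cv4 : (fun K => 4%:E * mu (D K)) @ \oo --> 0.
  by rewrite -(mule0 4%:E); apply: cvgeZl => //; exact: measure_D_cvg0.
rewrite -(cvg_lim _ cv4) //; apply: lime_ge; first by apply/cvg_ex; eexists; exact: cv4.
exists (maxn K0 1) => // K /= KK.
have mR : measurable (runs T (D K)).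
  by apply: bigcupT_measurable => M; exact: measurable_runs_upto hT _ M (measurable_D K).
have sub : W `<=` B `|` runs T (D K).
  move=> x Wx; have [Bx|nBx] := pselect (B x); [by left|right].
  apply: orbit_run => // j.
  by apply: contra_notP nBx => Fj; apply: invB; exists j; apply/eqP.
apply: le_trans (le_measure _ _ _ sub) _; rewrite ?inE //; first exact: measurableU.
apply: (@le_trans _ _ (mu B + mu (runs T (D K)))); first exact: measureU2.
have -> : mu B = 0 := B0.
by rewrite add0e; exact: measure_runs_le.
Qed.

End orbit_liminf.

Theorem theorem3p6 (d : measure_display) (X : measurableType d) (R : realType)
  (mu : probability X R) (T : X -> X) (f : X -> \bar R) (s : nat -> R) :
  measure_preserving mu T ->
  measurable_fun [set: X] f ->
  (forall x, (0 <= f x)%E) ->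
  scale_sequence s ->
  two_jumpy s ->
  mu ((fun x => limn_einf (fun n => ((s n)%:E * f (iter n T x))%E))
        @^-1` [set 0%E; +oo%E]) = 1%E.
Proof.
move=> hT mf f_ge0 [s_gt0 _] jumpy.
have [N0 s_nondecr] := jumpy.1.
have [c c_gt1 [K0 s_jump]] := two_jumpy_jump s_gt0 jumpy.
change (mu (orbit_liminf s f T @^-1` [set 0%E; +oo%E]) = 1%E).
rewrite preimage_0y_setC; last exact: orbit_liminf_ge0 f_ge0 s_gt0.
rewrite probability_setC; last exact: measurable_orbit_liminf_pos hT mf.
have -> : mu (orbit_liminf s f T @^-1` `]0%E, +oo%E[) = 0%E :=
  measure_orbit_liminf_pos hT mf f_ge0 s_nondecr c_gt1 s_jump.
by rewrite sube0.
Qed.
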